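(* Let $N\ge4$ be even. Then: (i) for every $k$ with $1\le k\le N/2-1$, $\mathrm{scale}_N[k]\cdot\mathrm{scale}_N[N/2-k]=\mathrm{GenScale}[N]$ (i.e. the list of scales equals the reversed list of $\mathrm{GenScale}[N]$ divided by the scales), and the $\mathbb{Q}$-span of the scales $\{\mathrm{scale}_N[k]:1\le k\le N/2-1\}$ has dimension at most $N/4$; (ii) if $N\equiv 2\pmod 4$, the dimension of that $\mathbb{Q}$-span is at most $\lfloor N/4\rfloor$, and the even-indexed and odd-indexed scales determine each other via $\mathrm{scale}_N[2m]=\mathrm{GenScale}[N]/\mathrm{scale}_N[N/2-2m]$ (with $N/2-2m$ odd); (iii) if $4\mid N$, then $\mathrm{scale}_N[N/4]=\sqrt{\mathrm{GenScale}[N]}$, and the scales with indices $k>N/4$ are obtained from those with $k<N/4$ as $\mathrm{GenScale}[N]/\mathrm{scale}_N[k]$; (iv) if $N\ge6$, then $\mathrm{ScaleSwap}[N,N/2]=\mathrm{scale}_N[2]$ and for every $k$ with $1\le k<N/4$, $\mathrm{scale}_{N/2}[k]=\mathrm{scale}_N[2k]/\mathrm{ScaleSwap}[N,N/2]$.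
   Context: For an integer $n\ge3$ and $1\le k<n/2$, $\mathrm{scale}_n[k]=\tan(\pi/n)/\tan(k\pi/n)$. $\langle n/2\rangle$ is the greatest integer strictly less than $n/2$ and $\mathrm{GenScale}[n]=\mathrm{scale}_n[\langle n/2\rangle]$ (so for $n$ even, $\mathrm{GenScale}[n]=\mathrm{scale}_n[n/2-1]$). $\mathrm{ScaleSwap}[n,m]=\tan(\pi/n)/\tan(\pi/m)$. *)

From HB Require Import structures.
From mathcomp Require Import all_boot all_order all_algebra.
From mathcomp Require Import all_classical all_reals.
From mathcomp Require Import trigo.
Set Implicit Arguments. Unset Strict Implicit. Unset Printing Implicit Defensive.
Import Order.TTheory GRing.Theory Num.Theory.
Local Open Scope ring_scope.

Definition scale {R : realType} (n k : nat) : R :=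
  tan (pi / n%:R) / tan (k%:R * pi / n%:R).

(* <n/2> = greatest integer strictly less than n/2 = (n-1) div 2 *)
Definition half_lt (n : nat) : nat := (n.-1)./2.

Definition GenScale {R : realType} (n : nat) : R := scale n (half_lt n).

Definition ScaleSwap {R : realType} (n m : nat) : R :=
  tan (pi / n%:R) / tan (pi / m%:R).

Definition scales {R : realType} (N : nat) : seq R :=
  [seq scale N k | k <- iota 1 (N./2 - 1)].

(* "The Q-span of the reals in s has dimension at most d":
   there are d reals spanning (over Q) every element of s. *)
Definition Qspan_dim_le {R : realType} (s : seq R) (d : nat) : Prop :=
  exists b : 'I_d -> R,
    forall x, x \in s -> exists c : 'I_d -> rat, x = \sum_(i < d) ratr (c i) * b i.

From HB Require Import structures.
From mathcomp Require Import all_boot all_order all_algebra.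
From mathcomp Require Import all_classical all_reals.
From mathcomp Require Import trigo.
From mathcomp Require Import ring lra zify.
Import Order.TTheory GRing.Theory Num.Theory.
Local Open Scope ring_scope.

(* Write N = 2n and theta_k = k pi / (2n), so that scale_N[k] = tan theta_1 / tan theta_k.
   Since theta_(n-k) = pi/2 - theta_k, tan theta_(n-k) = cot theta_k; this reflection gives
   scale_N[k] * scale_N[n-k] = tan^2 theta_1 = GenScale[N] and every statement about
   individual scales.  For the dimension bound, scale_N[k] = cot theta_(n-1) * cot theta_k and
   cot theta_a = -(1/n) sum_(j < 2n) j sin(j a pi / n), so each scale is a rational combination
   of products sin(p pi/n) sin(q pi/n), i.e. of values cos(r pi/n).  Periodicity and symmetry
   reduce these to +-cos(r pi/n) with r <= n/2, and one more value is redundant: cos(pi/2) = 0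
   when n is even, and sum_(1 <= i <= (n-1)/2) (-1)^(i-1) cos(i pi/n) = 1/2 when n is odd.
   This leaves floor(n/2) = floor(N/4) spanning reals. *)

Lemma natr_double {R : pzSemiRingType} n : n.*2%:R = 2 * n%:R :> R.
Proof. by rewrite -mul2n natrM. Qed.

Lemma tan_pihalfB {R : realType} (x : R) : tan (pi / 2 - x) = (tan x)^-1.
Proof.
by rewrite /tan invf_div sinB cosB cos_pihalf sin_pihalf !mul0r !mul1r subr0 add0r.
Qed.

Lemma weighted_sin_sum {R : realType} (u : R) m :
  2 * (1 - cos u) * (\sum_(j < m) j%:R * sin (j%:R * u)) =
  m%:R * sin ((m%:R - 1) * u) - (m%:R - 1) * sin (m%:R * u).
Proof.
elim: m => [|m IH]; first by rewrite big_ord0 !mul0r mulr0 sin0 mulr0 subr0.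
rewrite big_ord_recr /= mulrDr IH -[m.+1%:R]natr1 addrK.
by rewrite [(_ - 1) * u]mulrBl [(_ + 1) * u]mulrDl !mul1r sinB sinD; ring.
Qed.

Lemma weighted_sin_sum_cot {R : realType} (t : R) m k :
  m%:R * t = pi *+ k -> sin t != 0 ->
  \sum_(j < m) j%:R * sin (j%:R * t *+ 2) = - (m%:R / 2) * (cos t / sin t).
Proof.
move=> mt st0; have := weighted_sin_sum (t *+ 2) m.
have e1 : m%:R * (t *+ 2) = 0 + pi *+ 2 *+ k.
  by rewrite add0r mulrnAr mt -mulrnA mulnC mulrnA.
have e2 : (m%:R - 1) * (t *+ 2) = - (t *+ 2) + pi *+ 2 *+ k.
  by rewrite mulrBl mul1r e1 add0r addrC.
rewrite e1 e2 !(periodicn (@sinD2pi R)) sin0 mulr0 subr0 sinN.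
under eq_bigr do rewrite mulrnAr.
have c2 : 1 - (cos t ^+ 2 *+ 2 - 1) = sin t ^+ 2 *+ 2.
  by rewrite -(cos2Dsin2 t); ring.
rewrite cos_mulr2n sin_mulr2n c2 => sumE.
have A0 : 2 * (sin t ^+ 2 *+ 2) != 0.
  by rewrite mulf_neq0 ?pnatr_eq0 // -mulr_natr mulf_neq0 ?pnatr_eq0 ?expf_neq0.
by rewrite -[LHS](mulKf A0) sumE; field; rewrite st0.
Qed.

Lemma alternating_cos_sum {R : realType} (v : R) h :
  2 * cos v * (\sum_(m < h.+1) (-1) ^+ m * cos (m%:R * (2 * v))) =
  cos v + (-1) ^+ h * cos ((2 * h%:R + 1) * v).
Proof.
elim: h => [|h IH].
  by rewrite big_ord1 expr0 !(mul0r, mul1r, mulr0, add0r) cos0 mulr1; ring.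
rewrite big_ord_recr /= mulrDr IH exprS.
set A := (2 * h%:R + 1) * v.
have -> : h.+1%:R * (2 * v) = A + v by rewrite /A -natr1; ring.
have -> : (2 * h.+1%:R + 1) * v = A + v + v by rewrite /A -natr1; ring.
rewrite [in X in X + _ = _](_ : cos A = cos A * (cos v ^+ 2 + sin v ^+ 2)).
  by rewrite !cosD sinD; ring.
by rewrite cos2Dsin2 mulr1.
Qed.

Section RationalSpan.
Variables (R : numFieldType) (d : nat) (b : 'I_d -> R).

Definition in_Qspan (y : R) :=
  exists c : 'I_d -> rat, y = \sum_(i < d) ratr (c i) * b i.

Lemma in_Qspan0 : in_Qspan 0.
Proof. by exists (fun=> 0); rewrite big1 // => i _; rewrite rmorph0 mul0r. Qed.

Lemma in_QspanD y z : in_Qspan y -> in_Qspan z -> in_Qspan (y + z).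
Proof.
move=> [c1 ->] [c2 ->]; exists (fun i => c1 i + c2 i).
by rewrite -big_split; apply: eq_bigr => i _; rewrite rmorphD mulrDl.
Qed.

Lemma in_QspanZ q y : in_Qspan y -> in_Qspan (ratr q * y).
Proof.
move=> [c ->]; exists (fun i => q * c i).
by rewrite mulr_sumr; apply: eq_bigr => i _; rewrite rmorphM mulrA.
Qed.

Lemma in_QspanN y : in_Qspan y -> in_Qspan (- y).
Proof. by move=> /(in_QspanZ (-1)); rewrite rmorphN1 mulN1r. Qed.

Lemma in_Qspan_sum m (F : 'I_m -> R) :
  (forall j, in_Qspan (F j)) -> in_Qspan (\sum_(j < m) F j).
Proof.
by move=> FP; elim/big_ind: _ => //; [exact: in_Qspan0 | exact: in_QspanD].
Qed.

Lemma in_Qspan_gen i : in_Qspan (b i).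
Proof.
exists (fun j => (j == i)%:R); rewrite (bigD1 i) //= eqxx rmorph1 mul1r.
by rewrite big1 ?addr0 // => j /negbTE ->; rewrite rmorph0 mul0r.
Qed.

End RationalSpan.

Arguments in_Qspan {R d} b y.

Section HalfAngles.
Variable R : realType.

Definition theta (n k : nat) : R := k%:R * pi / (n.*2)%:R.

Lemma theta_subn n k : (k <= n)%N -> (0 < n)%N ->
  theta n (n - k) = pi / 2 - theta n k.
Proof.
move=> kn n0; have n0R : n%:R != 0 :> R by rewrite pnatr_eq0 -lt0n.
by rewrite /theta natrB // natr_double; field.
Qed.

Lemma theta_gt0_lt_pihalf n k : (0 < k < n)%N -> 0 < theta n k < pi / 2.
Proof.
case/andP=> k0 kn; have n0 : (0 < n)%N by apply: leq_ltn_trans kn.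
have pi0 := @pi_gt0 R.
rewrite /theta natr_double; apply/andP; split.
  by rewrite !(divr_gt0, mulr_gt0) ?ltr0n.
rewrite -(mul1r (pi / 2)) [X in X < _](_ : _ = (k%:R / n%:R) * (pi / 2)).
  by rewrite ltr_pM2r ?divr_gt0 // ltr_pdivrMr ?ltr0n // mul1r ltr_nat.
by field; rewrite pnatr_eq0 -lt0n.
Qed.

Lemma sin_theta_gt0 n k : (0 < k < n)%N -> 0 < sin (theta n k).
Proof. by move=> /theta_gt0_lt_pihalf; exact: sin_gt0_pihalf. Qed.

Lemma cos_theta_gt0 n k : (0 < k < n)%N -> 0 < cos (theta n k).
Proof.
move=> /theta_gt0_lt_pihalf /andP[t0 tpi]; apply: cos_gt0_pihalf.
by rewrite tpi andbT (lt_trans _ t0) // oppr_lt0 divr_gt0 ?pi_gt0.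
Qed.

Lemma tan_theta_gt0 n k : (0 < k < n)%N -> 0 < tan (theta n k).
Proof. by move=> kn; rewrite divr_gt0 ?sin_theta_gt0 ?cos_theta_gt0. Qed.

Lemma tan_theta_subn n k : (k <= n)%N -> (0 < n)%N ->
  tan (theta n (n - k)) = (tan (theta n k))^-1.
Proof. by move=> kn n0; rewrite theta_subn // tan_pihalfB. Qed.

End HalfAngles.

Section Scales.
Variable R : realType.

Lemma scale_double n k : scale (n.*2) k = tan (theta R n 1) / tan (theta R n k).
Proof. by rewrite /scale /theta mul1r. Qed.

Lemma half_lt_double n : half_lt n.*2 = (n - 1)%N.
Proof. by case: n => // n; rewrite /half_lt doubleS /= uphalf_double subn1. Qed.

Lemma GenScale_double n : (0 < n)%N -> GenScale (n.*2) = tan (theta R n 1) ^+ 2.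
Proof.
move=> n0; rewrite /GenScale half_lt_double scale_double tan_theta_subn //.
by rewrite invrK expr2.
Qed.

Lemma scale_double_gt0 n k : (0 < k < n)%N -> 0 < scale (n.*2) k :> R.
Proof.
move=> /andP[k0 kn]; have n1 : (0 < 1 < n)%N by rewrite /= (leq_ltn_trans k0).
by rewrite scale_double divr_gt0 ?tan_theta_gt0 ?k0.
Qed.

Lemma scale_reflect n k : (0 < k < n)%N ->
  scale (n.*2) k * scale (n.*2) (n - k) = GenScale (n.*2) :> R.
Proof.
move=> /andP[k0 kn]; have n0 : (0 < n)%N by apply: leq_ltn_trans kn.
have tk0 : tan (theta R n k) != 0 by rewrite gt_eqF ?tan_theta_gt0 ?k0.
rewrite GenScale_double // !scale_double tan_theta_subn ?(ltnW kn) //.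
by rewrite invrK mulrACA mulVf // mulr1 expr2.
Qed.

Lemma scale_reflectV n k : (0 < k < n)%N ->
  scale (n.*2) k = GenScale (n.*2) / scale (n.*2) (n - k) :> R.
Proof.
move=> kn; rewrite -(scale_reflect _ _ kn) mulfK // gt_eqF // scale_double_gt0 //; lia.
Qed.

Lemma rev_iota1 m : rev (iota 1 m) = map (fun k => m.+1 - k)%N (iota 1 m).
Proof.
apply: (@eq_from_nth _ 0%N) => [|i]; first by rewrite size_rev size_map.
rewrite size_rev size_iota => im.
rewrite nth_rev ?size_iota // (nth_map 0%N) ?size_iota // !nth_iota //; lia.
Qed.

Lemma scales_double_rev n :
  scales (n.*2) = rev [seq GenScale (n.*2) / x | x <- scales (n.*2)] :> seq R.
Proof.
rewrite /scales doubleK -map_comp -map_rev; apply/esym.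
rewrite rev_iota1 -map_comp; apply/eq_in_map => k; rewrite mem_iota => hk /=.
rewrite [RHS](scale_reflectV n k); last lia.
by congr (_ / scale _ _); lia.
Qed.

Lemma scale_double_half n : (0 < n)%N -> ~~ odd n ->
  scale (n.*2) n./2 = Num.sqrt (GenScale (n.*2)) :> R.
Proof.
move=> n0 n_even; have hn : (0 < n./2 < n)%N by lia.
have := scale_reflect _ _ hn; have -> : (n - n./2 = n./2)%N by lia.
move=> <-; rewrite -expr2 sqrtr_sqr ger0_norm //.
by rewrite ltW // scale_double_gt0.
Qed.

Lemma theta_mul2n n k : (0 < n)%N -> theta R n (2 * k) = k%:R * pi / n%:R.
Proof.
by move=> n0; rewrite /theta natrM natr_double; field; rewrite pnatr_eq0 -lt0n.
Qed.

Lemma ScaleSwap_double n : (0 < n)%N -> ScaleSwap (n.*2) n = scale (n.*2) 2 :> R.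
Proof.
by move=> n0; rewrite scale_double -[2%N]muln1 theta_mul2n // /theta mul1r.
Qed.

Lemma scale_halve n k : (1 < n)%N ->
  scale n k = scale (n.*2) (2 * k) / ScaleSwap (n.*2) n :> R.
Proof.
move=> n1; have n0 := ltnW n1.
have t10 : tan (theta R n 1) != 0 by rewrite gt_eqF // tan_theta_gt0.
rewrite ScaleSwap_double // !scale_double theta_mul2n // -[2%N]muln1 theta_mul2n // mul1r /scale.
move: (tan (theta R n 1)) t10 (tan (pi / n%:R)) (tan (k%:R * pi / n%:R)) => a a0 c b.
by rewrite invf_div [RHS]mulrC mulrA divfK.
Qed.

End Scales.

Section CosineSpan.
Variables (R : realType) (n : nat).
Hypothesis n_gt1 : (1 < n)%N.

Definition cos_frac (r : nat) : R := cos (r%:R * pi / n%:R).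
Definition sin_frac (r : nat) : R := sin (r%:R * pi / n%:R).

Let n0R : n%:R != 0 :> R.
Proof. by rewrite pnatr_eq0 -lt0n ltnW. Qed.

Lemma cos_frac0 : cos_frac 0 = 1.
Proof. by rewrite /cos_frac !mul0r cos0. Qed.

Lemma cos_frac_mod r : cos_frac (r %% n.*2) = cos_frac r.
Proof.
rewrite /cos_frac [in RHS](divn_eq r n.*2) natrD natrM !mulrDl.
have -> : (r %/ n.*2)%:R * n.*2%:R * pi / n%:R = pi *+ 2 *+ (r %/ n.*2) :> R.
  by rewrite -mulrnA -[pi *+ _]mulr_natr natrM natr_double; field.
by rewrite addrC (periodicn (@cosD2pi R)).
Qed.

Lemma cos_frac_sym r : (r <= n.*2)%N -> cos_frac (n.*2 - r) = cos_frac r.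
Proof.
move=> rn; rewrite /cos_frac natrB // natr_double.
rewrite (_ : _ * pi / _ = - (r%:R * pi / n%:R) + pi *+ 2) ?cosD2pi ?cosN //.
by rewrite -[pi *+ 2]mulr_natr; field.
Qed.

Lemma cos_frac_subn r : (r <= n)%N -> cos_frac (n - r) = - cos_frac r.
Proof.
move=> rn; rewrite /cos_frac natrB //.
by rewrite (_ : _ * pi / _ = - (r%:R * pi / n%:R) + pi) ?cosDpi ?cosN //; field.
Qed.

Lemma cos_frac_half : ~~ odd n -> cos_frac n./2 = 0.
Proof.
move=> n_even; have nE : n = n./2.*2 by rewrite -[LHS]odd_double_half (negbTE n_even).
rewrite /cos_frac [in n%:R]nE natr_double (_ : _ * pi / _ = pi / 2) ?cos_pihalf //.
by field; rewrite pnatr_eq0 -lt0n half_gt0.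
Qed.

Lemma odd_alternating_cos_frac_sum : odd n ->
  \sum_(i < n./2) (-1) ^+ i * cos_frac i.+1 = 2^-1.
Proof.
move=> n_odd; set v := theta R n 1.
have nE : n%:R = 2 * n./2%:R + 1 :> R.
  by rewrite -[in LHS](odd_double_half n) n_odd natrD natr_double addrC.
have := alternating_cos_sum v n./2.
have -> : (2 * n./2%:R + 1) * v = pi / 2.
  by rewrite /v /theta natr_double nE; field; rewrite -nE.
rewrite cos_pihalf mulr0 addr0 big_ord_recl /= expr0 mul0r cos0 mul1r.
have -> : \sum_(i < n./2) (-1) ^+ bump 0 i * cos ((bump 0 i)%:R * (2 * v)) =
          - \sum_(i < n./2) (-1) ^+ i * cos_frac i.+1.
  rewrite -sumrN; apply: eq_bigr => i _; rewrite /bump /= add1n exprS mulN1r mulNr.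
  by rewrite /cos_frac /v /theta natr_double; congr (- (_ * cos _)); field.
have cv0 : cos v != 0 by rewrite gt_eqF // cos_theta_gt0.
set S := \sum_(i < _) _ => sumE.
have : 2 * (1 - S) = 1 by apply: (mulfI cv0); rewrite mulrA [cos v * 2]mulrC sumE mulr1.
lra.
Qed.

Definition cos_basis (i : 'I_n./2) : R := cos_frac (i + odd n).

Lemma one_in_span : in_Qspan cos_basis 1.
Proof.
case n_odd: (odd n).
  rewrite -[1](mulfV (_ : 2 != 0)) ?pnatr_eq0 // -(odd_alternating_cos_frac_sum n_odd).
  rewrite -[2](rmorph_nat (ratr : rat -> R)); apply: in_QspanZ.
  apply: in_Qspan_sum => i; rewrite -[(-1) ^+ i](rmorph_sign (ratr : rat -> R)).
  rewrite (_ : cos_frac i.+1 = cos_basis i); first by apply: in_QspanZ; exact: in_Qspan_gen.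
  by rewrite /cos_basis n_odd addn1.
have n2_gt0 : (0 < n./2)%N by rewrite half_gt0.
have -> : 1 = cos_basis (Ordinal n2_gt0) by rewrite /cos_basis n_odd cos_frac0.
exact: in_Qspan_gen.
Qed.

Lemma cos_frac_in_span_le_half m : (m <= n./2)%N -> in_Qspan cos_basis (cos_frac m).
Proof.
move=> mn; case: m mn => [|m] mn; first by rewrite cos_frac0; exact: one_in_span.
case n_odd: (odd n).
  have m_lt : (m < n./2)%N by [].
  have -> : cos_frac m.+1 = cos_basis (Ordinal m_lt) by rewrite /cos_basis n_odd addn1.
  exact: in_Qspan_gen.
case: (ltnP m.+1 n./2) => [m_lt | m_ge].
  have -> : cos_frac m.+1 = cos_basis (Ordinal m_lt) by rewrite /cos_basis n_odd addn0.
  exact: in_Qspan_gen.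
have -> : m.+1 = n./2 by apply/eqP; rewrite eqn_leq mn.
by rewrite cos_frac_half ?n_odd //; exact: in_Qspan0.
Qed.

Lemma cos_frac_in_span_le_n m : (m <= n)%N -> in_Qspan cos_basis (cos_frac m).
Proof.
move=> mn; case: (leqP m n./2) => [|m_gt]; first exact: cos_frac_in_span_le_half.
rewrite -(subKn mn) cos_frac_subn ?leq_subr //; apply: in_QspanN.
apply: cos_frac_in_span_le_half; lia.
Qed.

Lemma cos_frac_in_span r : in_Qspan cos_basis (cos_frac r).
Proof.
rewrite -cos_frac_mod; have : (r %% n.*2 < n.*2)%N by rewrite ltn_mod double_gt0 (ltnW n_gt1).
move: (r %% n.*2)%N => s s_lt; case: (leqP s n) => [|s_gt]; first exact: cos_frac_in_span_le_n.
rewrite -cos_frac_sym ?(ltnW s_lt) //; apply: cos_frac_in_span_le_n; lia.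
Qed.

Lemma sin_frac_mul_in_span p q : in_Qspan cos_basis (sin_frac p * sin_frac q).
Proof.
wlog pq : p q / (p <= q)%N.
  by move=> W; case/orP: (leq_total p q) => /W //; rewrite mulrC.
have -> : sin_frac p * sin_frac q = ratr 2^-1 * (cos_frac (q - p) - cos_frac (p + q)).
  rewrite /sin_frac /cos_frac natrB // natrD fmorphV rmorph_nat.
  set P := p%:R * pi / n%:R; set Q := q%:R * pi / n%:R.
  have -> : (q%:R - p%:R) * pi / n%:R = Q - P by rewrite /P /Q; field.
  have -> : (p%:R + q%:R) * pi / n%:R = P + Q by rewrite /P /Q; field.
  by rewrite cosB cosD; field.
by apply: in_QspanZ; apply: in_QspanD; [|apply: in_QspanN]; exact: cos_frac_in_span.
Qed.

Lemma cot_theta_sin_frac_sum a : (0 < a < n)%N ->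
  cos (theta R n a) / sin (theta R n a) =
  \sum_(j < n.*2) ratr (- (j%:R / n%:R)) * sin_frac (j * a).
Proof.
move=> an; set t := theta R n a.
have st0 : sin t != 0 by rewrite gt_eqF // sin_theta_gt0.
have mt : n.*2%:R * t = pi *+ a.
  by rewrite /t /theta -[pi *+ a]mulr_natr natr_double; field.
rewrite (eq_bigr (fun j : 'I_n.*2 => - n%:R^-1 * (j%:R * sin (j%:R * t *+ 2)))).
  by rewrite -mulr_sumr (weighted_sin_sum_cot _ _ _ mt st0) natr_double; field; rewrite ?st0.
move=> j _; rewrite rmorphN fmorph_div !rmorph_nat /sin_frac natrM.
rewrite (_ : _ * pi / n%:R = j%:R * t *+ 2); first by field.
by rewrite /t /theta -mulr_natr natr_double; field.
Qed.

Lemma scales_double_Qspan : Qspan_dim_le (scales (n.*2) : seq R) n./2.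
Proof.
exists cos_basis => x /mapP[k]; rewrite mem_iota doubleK => k_range ->.
have kn : (0 < k < n)%N by lia.
have n1n : (0 < n - 1 < n)%N by lia.
rewrite scale_double.
have -> : tan (theta R n 1) = (tan (theta R n (n - 1)))^-1.
  by rewrite -tan_theta_subn ?subKn ?leq_subr // ltnW.
rewrite /tan !invf_div !cot_theta_sin_frac_sum // mulr_suml.
apply: in_Qspan_sum => j; rewrite mulr_sumr; apply: in_Qspan_sum => l.
by rewrite mulrACA -rmorphM; apply: in_QspanZ; exact: sin_frac_mul_in_span.
Qed.

End CosineSpan.

Theorem lemma5 (R : realType) (N : nat) (HN4 : (4 <= N)%N) (Hev : ~~ odd N) :
  (* (i) *)
  ((forall k : nat, (1 <= k <= N./2 - 1)%N ->
      scale N k * scale N (N./2 - k) = GenScale N :> R)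
   /\ scales N = rev [seq GenScale N / x | x <- scales N] :> seq R
   /\ Qspan_dim_le (scales N : seq R) (N %/ 4))
  (* (ii) *)
  /\ ((N %% 4 = 2)%N ->
      Qspan_dim_le (scales N : seq R) (N %/ 4)
       /\ forall m : nat, (1 <= 2 * m <= N./2 - 1)%N ->
            odd (N./2 - 2 * m) /\
            scale N (2 * m) = GenScale N / scale N (N./2 - 2 * m) :> R)
  (* (iii) *)
  /\ ((4 %| N)%N ->
      scale N (N %/ 4) = Num.sqrt (GenScale N) :> R
      /\ forall k : nat, (N %/ 4 < k <= N./2 - 1)%N ->
            scale N k = GenScale N / scale N (N./2 - k) :> R)
  (* (iv) *)
  /\ ((6 <= N)%N ->
      ScaleSwap N N./2 = scale N 2 :> R
      /\ forall k : nat, (1 <= k)%N -> (4 * k < N)%N ->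
            scale N./2 k = scale N (2 * k) / ScaleSwap N N./2 :> R).
Proof.
have [n N_eq] : exists n, N = n.*2.
  by exists N./2; rewrite -[LHS]odd_double_half (negbTE Hev).
subst N.
have n_gt1 : (1 < n)%N by lia.
have -> : (n.*2 %/ 4 = n./2)%N by lia.
rewrite doubleK; split; [|split; [|split]].
- split; first by move=> k kn; apply: scale_reflect; lia.
  by split; [exact: scales_double_rev | exact: scales_double_Qspan].
- move=> n_mod4; split; first exact: scales_double_Qspan.
  by move=> m mn; split; [lia | apply: scale_reflectV; lia].
- move=> n_div4; split; first by apply: scale_double_half; lia.
  by move=> k kn; apply: scale_reflectV; lia.
- move=> n_ge6; split; first by apply: ScaleSwap_double; lia.
  by move=> k _ _; exact: scale_halve.
Qed.
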